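(* Let $m,n$ be integers with $mn\neq0$ and let $K=J(2m,2n)$, with knot group $\pi_1(K)=\langle a,b\mid w^na=bw^n\rangle$, where $a,b$ are meridians and $w=(ba^{-1})^m(b^{-1}a)^m$. Let $s\neq0$ and $y\neq 2$ be complex numbers such that $\rho(a)=\begin{bmatrix}s&1\\0&s^{-1}\end{bmatrix}$, $\rho(b)=\begin{bmatrix}s&0\\2-y&s^{-1}\end{bmatrix}$ defines a representation $\rho:\pi_1(K)\to SL_2(\mathbb C)$ (equivalently $s,y$ satisfy the Riley equation $\phi_K(s,y)=0$). Let $\lambda=\overleftarrow{w}^nw^n$ be the canonical longitude corresponding to the meridian $a$, where $\overleftarrow{w}$ is the word $w$ written in reverse order. Then $$\operatorname{tr}\rho(\lambda)=2-\frac{(s+s^{-1})^2(y-2)^2S_{m-1}^2(y)}{2-s^2-s^{-2}+(y-s^2-s^{-2})(y-2)S_{m-1}^2(y)}.$$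
   Context: $S_k(v)$ denotes the Chebyshev polynomials of the second kind, defined for all integers $k$ by $S_0(v)=1$, $S_1(v)=v$, $S_k(v)=vS_{k-1}(v)-S_{k-2}(v)$. Explicitly, the Riley polynomial is $\phi_K(s,y)=S_n(z)-\big\{1+(y-s^2-s^{-2})S_{m-1}(y)(S_m(y)-S_{m-1}(y))\big\}S_{n-1}(z)$ with $z=2+(y-2)(y-s^2-s^{-2})S_{m-1}^2(y)=\operatorname{tr}\rho(w)$. *)

From HB Require Import structures.
From mathcomp Require Import all_boot all_order all_algebra.
From mathcomp Require Import complex reals.
Set Implicit Arguments. Unset Strict Implicit. Unset Printing Implicit Defensive.
Import Order.TTheory GRing.Theory Num.Theory.
Local Open Scope ring_scope.

Fixpoint chebS_pair {F : pzRingType} (v : F) (k : nat) : F * F :=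
  (* returns (S_k(v), S_{k+1}(v)) *)
  match k with
  | 0%N => (1, v)
  | k'.+1 => let p := chebS_pair v k' in (p.2, v * p.2 - p.1)
  end.
Definition chebS_nat {F : pzRingType} (v : F) (k : nat) : F := (chebS_pair v k).1.

(* Extension to all integers k, compatible with the recurrence
   S_k = v S_{k-1} - S_{k-2}: S_{-1} = 0 and S_{-k} = - S_{k-2}. *)
Definition chebS {F : pzRingType} (k : int) (v : F) : F :=
  match k with
  | Posz k' => chebS_nat v k'
  | Negz 0 => 0
  | Negz (k'.+1) => - chebS_nat v k'
  end.

Definition mx2 {F : pzRingType} (a b c d : F) : 'M[F]_2 :=
  \matrix_(i < 2, j < 2)
    if i == 0 :> 'I_2 then (if j == 0 :> 'I_2 then a else b)
    else (if j == 0 :> 'I_2 then c else d).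

Section RepJ.
Variables (R : realType).
Local Notation C := (R[i]).
Variables (m n : int) (s y : C).
Definition rhoA : 'M[C]_2 := mx2 s 1 0 s^-1.
Definition rhoB : 'M[C]_2 := mx2 s 0 (2 - y) s^-1.
Definition rhoW : 'M[C]_2 :=
  (rhoB * rhoA^-1) ^ m * (rhoB^-1 * rhoA) ^ m.
Definition rhoWrev : 'M[C]_2 :=
  (rhoA * rhoB^-1) ^ m * (rhoA^-1 * rhoB) ^ m.
Definition rhoLambda : 'M[C]_2 := rhoWrev ^ n * rhoW ^ n.
End RepJ.

(* Put P = rho(b a^-1) and Q = rho(b^-1 a). Both lie in SL_2 with trace y, so by Cayley-Hamilton
   U := P^m = p P - q and V := Q^m = p Q - q with p = S_{m-1}(y), q = S_{m-2}(y); moreover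
   rho(w) = U V and rho(<-w) = U^-1 V^-1 have the same trace. Cayley-Hamilton again gives
   rho(w)^n = a1 rho(w) - a0, and the (1,2) entry of the Riley relation forces a0 = a1 e for an
   explicit scalar e. Hence rho(lambda) = a1^2 (rho(<-w) - e)(rho(w) - e) with
   a1^2 det(rho(w) - e) = 1, i.e. tr rho(lambda) = 2 - (2 - tr(rho(<-w) rho(w))) / det(rho(w) - e),
   which no longer depends on n. Finally rho(<-w) rho(w) is the commutator of U^-1 and V^-1, so
   2 - tr(rho(<-w) rho(w)) = det(U^-1 V^-1 - V^-1 U^-1) = p^4 det(P^-1 Q^-1 - Q^-1 P^-1), while
   det(rho(w) - e) is computed explicitly using p^2 - y p q + q^2 = det U = 1. *)

From mathcomp Require Import all_boot all_algebra.
From mathcomp Require Import complex reals.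
From mathcomp Require Import zify ring.
Import GRing.Theory.
Set Implicit Arguments. Unset Strict Implicit. Unset Printing Implicit Defensive.
Local Open Scope ring_scope.

Section Mx2.
Variable F : comNzRingType.
Implicit Types (a b c d k : F) (M : 'M[F]_2).

Lemma mx2_eta M : M = mx2 (M 0 0) (M 0 1) (M 1 0) (M 1 1).
Proof.
by apply/matrixP => -[[|[|i]] Hi] [[|[|j]] Hj]; rewrite !mxE //=; congr (M _ _); apply: val_inj.
Qed.

Lemma mx2_ind (P : 'M[F]_2 -> Prop) :
  (forall a b c d, P (mx2 a b c d)) -> forall M, P M.
Proof. by move=> PM M; rewrite [M]mx2_eta. Qed.

Lemma add_mx2 a b c d a' b' c' d' :
  mx2 a b c d + mx2 a' b' c' d' = mx2 (a + a') (b + b') (c + c') (d + d').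
Proof. by apply/matrixP => i j; rewrite !mxE; case: ifP; case: ifP. Qed.

Lemma opp_mx2 a b c d : - mx2 a b c d = mx2 (- a) (- b) (- c) (- d).
Proof. by apply/matrixP => i j; rewrite !mxE; case: ifP; case: ifP. Qed.

Lemma scale_mx2 k a b c d : k *: mx2 a b c d = mx2 (k * a) (k * b) (k * c) (k * d).
Proof. by apply/matrixP => i j; rewrite !mxE; case: ifP; case: ifP. Qed.

Lemma scalar_mx2 k : k%:M = mx2 k 0 0 k :> 'M[F]_2.
Proof. by rewrite [LHS]mx2_eta !mxE. Qed.

Lemma mul_mx2 a b c d a' b' c' d' : mx2 a b c d * mx2 a' b' c' d' =
  mx2 (a * a' + b * c') (a * b' + b * d') (c * a' + d * c') (c * b' + d * d').
Proof.
rewrite [LHS]mx2_eta -[_ * _]/(_ *m _) !mxE !big_ord_recr !big_ord0 /= !mxE /=.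
by rewrite !add0r.
Qed.

Lemma det_mx2 a b c d : \det (mx2 a b c d) = a * d - b * c.
Proof.
rewrite (expand_det_row _ 0) !big_ord_recr big_ord0 /= add0r /cofactor !det_mx11 !mxE /=.
by rewrite expr0 expr1 !mul1r mulN1r mulrN.
Qed.

Lemma tr_mx2 a b c d : \tr (mx2 a b c d) = a + d.
Proof. by rewrite /mxtrace !big_ord_recr big_ord0 /= !mxE add0r. Qed.

End Mx2.

Definition mx2E := (scalar_mx2, scale_mx2, opp_mx2, add_mx2, mul_mx2, det_mx2, tr_mx2).

Section Mx2Identities.
Variable F : comNzRingType.
Implicit Types (a b e : F) (M X Y : 'M[F]_2).

Lemma cayley_hamilton2 M : M * M = \tr M *: M - (\det M)%:M.
Proof. by elim/mx2_ind: M => a b c d; rewrite !mx2E; congr mx2; ring. Qed.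

Lemma det_affine2 a b M :
  \det (a *: M - b%:M) = a ^+ 2 * \det M - a * b * \tr M + b ^+ 2.
Proof. by elim/mx2_ind: M => ? ? ? ?; rewrite !mx2E; ring. Qed.

Lemma commutator_affine2 a b X Y :
  (a *: X - b%:M) * (a *: Y - b%:M) - (a *: Y - b%:M) * (a *: X - b%:M) =
    a ^+ 2 *: (X * Y - Y * X).
Proof.
by elim/mx2_ind: X => ? ? ? ?; elim/mx2_ind: Y => ? ? ? ?; rewrite !mx2E; congr mx2; ring.
Qed.

Lemma tr_shift_mul2 e X Y :
  \tr ((Y - e%:M) * (X - e%:M)) = \tr (Y * X) - e * (\tr X + \tr Y) + 2 * e ^+ 2.
Proof.
by elim/mx2_ind: X => ? ? ? ?; elim/mx2_ind: Y => ? ? ? ?; rewrite !mx2E; ring.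
Qed.
End Mx2Identities.

Section Chebyshev.
Variable F : pzRingType.
Implicit Types (v : F).

Lemma chebS_Negz v (k : nat) : chebS (Negz k) v = - chebS (k%:Z - 1) v.
Proof.
case: k => [|k]; first by rewrite oppr0.
by have -> : (k.+1%:Z - 1) = k by lia.
Qed.

Lemma chebS_rec_nat v (j : nat) :
  chebS (j%:Z + 1) v = v * chebS j v - chebS (j%:Z - 1) v.
Proof.
case: j => [|j]; first by rewrite /= /chebS_nat /= mulr1 subr0.
by have [-> ->] : (j.+1%:Z + 1 = j.+2 /\ j.+1%:Z - 1 = j) by split; lia.
Qed.

Lemma chebS_rec v (k : int) : chebS (k + 1) v = v * chebS k v - chebS (k - 1) v.
Proof.
case: k => [j|k]; first exact: chebS_rec_nat.
have [-> ->] : (Negz k + 1 = - k%:Z /\ Negz k - 1 = Negz k.+1) by split; rewrite ?NegzE; lia.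
rewrite !chebS_Negz mulrN opprK; case: k => [|j].
  by rewrite /= /chebS_nat /= mulr0 oppr0 add0r.
have [-> -> ->] : [/\ - j.+1%:Z = Negz j, j.+1%:Z - 1 = j & j.+2%:Z - 1 = j%:Z + 1].
  by split; rewrite ?NegzE; lia.
by rewrite chebS_Negz chebS_rec_nat addKr.
Qed.
End Chebyshev.

Lemma exprz_inv_swap (U : unitRingType) (u v : U) (k : int) :
  u \is a GRing.unit -> v \is a GRing.unit ->
  (u / v) ^ k = ((v / u) ^ k)^-1 /\ (u^-1 * v) ^ k = ((v^-1 * u) ^ k)^-1.
Proof.
move=> uu uv; rewrite !invr_expz -!exprz_inv.
by rewrite !invrM ?invrK ?unitrV.
Qed.

Section SL2.
Variable F : comUnitRingType.
Implicit Types (a b : F) (M X Y : 'M[F]_2).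

Lemma det_mul2 X Y : \det (X * Y) = \det X * \det Y.
Proof. exact: det_mulmx. Qed.

Lemma unit_sl2 M : \det M = 1 -> M \is a GRing.unit.
Proof. by move=> detM; rewrite unitmxE detM unitr1. Qed.

Lemma inv_sl2 M : \det M = 1 -> M^-1 = (\tr M)%:M - M.
Proof.
move=> detM; have Mu := unit_sl2 detM; apply: (mulrI Mu); rewrite divrr //.
rewrite mulrBr cayley_hamilton2 detM -mulmxE mul_mx_scalar.
by rewrite opprB addrC subrK.
Qed.

Lemma tr_inv_sl2 M : \det M = 1 -> \tr M^-1 = \tr M.
Proof. by move=> detM; rewrite inv_sl2 // raddfB /= mxtrace_scalar mulr2n addrK. Qed.

Lemma det_inv_sl2 M : \det M = 1 -> \det M^-1 = 1.
Proof. by move=> detM; rewrite det_inv detM invr1. Qed.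

Lemma det_expr_sl2 M n : \det M = 1 -> \det (M ^+ n) = 1.
Proof.
move=> detM; elim: n => [|n IH]; first exact: det1.
by rewrite exprS det_mul2 detM IH mulr1.
Qed.

Lemma det_expz_sl2 M (k : int) : \det M = 1 -> \det (M ^ k) = 1.
Proof.
move=> detM; case: k => n; first exact: det_expr_sl2.
have -> : M ^ Negz n = M^-1 ^+ n.+1 by rewrite exprVn.
by rewrite det_expr_sl2 ?det_inv_sl2.
Qed.

Lemma expr_chebS M n : \det M = 1 ->
  M ^+ n = chebS (n%:Z - 1) (\tr M) *: M - (chebS (n%:Z - 2) (\tr M))%:M.
Proof.
move=> detM; elim: n => [|n IH].
  by rewrite expr0 /= /chebS_nat /= scale0r sub0r raddfN opprK.
rewrite exprSr IH.
have [-> -> ->] : [/\ n.+1%:Z - 1 = (n%:Z - 1) + 1, n.+1%:Z - 2 = n%:Z - 1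
                  & n%:Z - 2 = (n%:Z - 1) - 1] by split; lia.
rewrite chebS_rec mulrBl -scalerAl cayley_hamilton2 detM -mulmxE mul_scalar_mx.
by rewrite [M]mx2_eta !mx2E; congr mx2; ring.
Qed.

Lemma expz_chebS M (k : int) : \det M = 1 ->
  M ^ k = chebS (k - 1) (\tr M) *: M - (chebS (k - 2) (\tr M))%:M.
Proof.
move=> detM; case: k => n; first exact: expr_chebS.
have -> : M ^ Negz n = M^-1 ^+ n.+1 by rewrite exprVn.
rewrite expr_chebS ?det_inv_sl2 // tr_inv_sl2 // inv_sl2 //.
have [-> -> -> ->] : [/\ n.+1%:Z - 1 = n, n.+1%:Z - 2 = n%:Z - 1,
  Negz n - 1 = Negz n.+1 & Negz n - 2 = Negz n.+2] by split; rewrite ?NegzE; lia.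
rewrite !chebS_Negz.
have [-> ->] : (n.+1%:Z - 1 = n /\ n.+2%:Z - 1 = n%:Z + 1) by split; lia.
by rewrite chebS_rec [M]mx2_eta !mx2E; congr mx2; ring.
Qed.

Lemma chebS_det (k : int) (t : F) :
  chebS (k - 1) t ^+ 2 - t * chebS (k - 1) t * chebS (k - 2) t + chebS (k - 2) t ^+ 2 = 1.
Proof.
have detM : \det (mx2 t (-1) 1 0) = 1 by rewrite det_mx2; ring.
have := det_expz_sl2 k detM; rewrite expz_chebS // det_affine2 detM tr_mx2 addr0 => h.
by rewrite -[RHS]h; ring.
Qed.

Lemma tr_commutator_sl2 X Y : \det X = 1 -> \det Y = 1 ->
  \tr (X^-1 * Y^-1 * (X * Y)) = 2 - \det (X^-1 * Y^-1 - Y^-1 * X^-1).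
Proof.
move=> detX detY; set C := X^-1 * Y^-1 * (X * Y).
have detC : \det C = 1 by rewrite !det_mul2 !det_inv_sl2 // detX detY !mulr1.
have -> : X^-1 * Y^-1 - Y^-1 * X^-1 = (1 *: C - 1%:M) * (Y^-1 * X^-1).
  by rewrite scale1r mulrBl mul1r /C !mulrA !mulrK ?unit_sl2.
rewrite det_mul2 det_affine2 detC det_mul2 !det_inv_sl2 //; ring.
Qed.

Lemma inv_affine_sl2 a b M : \det M = 1 -> \det (a *: M - b%:M) = 1 ->
  (a *: M - b%:M)^-1 = a *: M^-1 - b%:M.
Proof.
move=> detM detN; rewrite !inv_sl2 //.
by rewrite [M]mx2_eta !mx2E; congr mx2; ring.
Qed.

Lemma tr_inv_mul_sl2 X Y : \det X = 1 -> \det Y = 1 -> \tr (X^-1 * Y^-1) = \tr (X * Y).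
Proof.
move=> detX detY; rewrite -invrM ?unit_sl2 // tr_inv_sl2; last by rewrite det_mul2 detX detY mulr1.
by rewrite -!mulmxE mxtrace_mulC.
Qed.
End SL2.

Lemma tr_mul_shifted2 (F : fieldType) (a e : F) (X Y : 'M[F]_2) :
  \det X = 1 -> \tr Y = \tr X -> a ^+ 2 * \det (X - e%:M) = 1 ->
  \tr (a *: (Y - e%:M) * (a *: (X - e%:M))) = 2 - (2 - \tr (Y * X)) / \det (X - e%:M).
Proof.
move=> detX trYX.
have : \det (X - e%:M) = 1 - e * \tr X + e ^+ 2.
  by rewrite -[X in X - _]scale1r det_affine2 detX; ring.
move: (\det _) => D hD detXe.
have D0 : D != 0 by apply/eqP => D0; move/eqP: detXe; rewrite D0 mulr0 eq_sym oner_eq0.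
rewrite -scalerAl -scalerAr !mxtraceZ tr_shift_mul2 trYX.
have -> : \tr (Y * X) - e * (\tr X + \tr X) + 2 * e ^+ 2 = \tr (Y * X) - 2 + 2 * D.
  by rewrite hD; ring.
have ha : a ^+ 2 = D^-1 by rewrite -[a ^+ 2](mulfK D0) detXe mul1r.
by rewrite mulrA -expr2 ha; field.
Qed.

Section RileyRepresentation.
Variables (R : realType) (s y : R[i]).
Hypothesis s_neq0 : s != 0.

Local Notation A := (rhoA s).
Local Notation B := (rhoB s y).
Local Notation P := (mx2 1 (- s) ((2 - y) / s) (y - 1)).
Local Notation Q := (mx2 1 s^-1 ((y - 2) * s) (y - 1)).

Lemma det_rhoA : \det A = 1.
Proof. by rewrite det_mx2; field. Qed.

Lemma det_rhoB : \det B = 1.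
Proof. by rewrite det_mx2; field. Qed.

Lemma rhoB_divA : B / A = P.
Proof. by rewrite inv_sl2 ?det_rhoA // !mx2E; congr mx2; field. Qed.

Lemma rhoBV_mulA : B^-1 * A = Q.
Proof. by rewrite inv_sl2 ?det_rhoB // !mx2E; congr mx2; field. Qed.

Lemma det_P : \det P = 1. Proof. by rewrite det_mx2; field. Qed.
Lemma det_Q : \det Q = 1. Proof. by rewrite det_mx2; field. Qed.
Lemma tr_P : \tr P = y. Proof. by rewrite tr_mx2; ring. Qed.
Lemma tr_Q : \tr Q = y. Proof. by rewrite tr_mx2; ring. Qed.

Lemma unit_rhoA : A \is a GRing.unit.
Proof. apply: unit_sl2; exact: det_rhoA. Qed.
Lemma unit_rhoB : B \is a GRing.unit.
Proof. apply: unit_sl2; exact: det_rhoB. Qed.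

Lemma rhoWrev_inv (m : int) :
  rhoWrev m s y = ((B / A) ^ m)^-1 * ((B^-1 * A) ^ m)^-1.
Proof.
have [hP hQ] := exprz_inv_swap m unit_rhoA unit_rhoB.
by rewrite /rhoWrev hP hQ.
Qed.

Lemma rhoW_chebS (m : int) :
  let U := chebS (m - 1) y *: P - (chebS (m - 2) y)%:M in
  let V := chebS (m - 1) y *: Q - (chebS (m - 2) y)%:M in
  rhoW m s y = U * V /\ rhoWrev m s y = U^-1 * V^-1.
Proof.
move=> U V.
have hU : (B / A) ^ m = U by rewrite rhoB_divA (expz_chebS m det_P) tr_P.
have hV : (B^-1 * A) ^ m = V by rewrite rhoBV_mulA (expz_chebS m det_Q) tr_Q.
by split; rewrite ?rhoWrev_inv /rhoW hU hV.
Qed.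

Lemma riley_relation_shift (W : 'M[R[i]]_2) (a b : R[i]) :
  (a *: W - b%:M) * A = B * (a *: W - b%:M) -> b = a * (W 0 0 - (s - s^-1) * W 0 1).
Proof.
rewrite [W]mx2_eta !mx2E => /(congr1 (fun M : 'M_2 => M 0 1)); rewrite !mxE /=.
move=> /eqP; rewrite -subr_eq0 => /eqP h.
by apply/eqP; rewrite -subr_eq0 -oppr_eq0; apply/eqP; rewrite -[RHS]h; ring.
Qed.

Lemma det_commutator_PQ :
  \det (P^-1 * Q^-1 - Q^-1 * P^-1) = - (s + s^-1) ^+ 2 * (y - 2) ^+ 2 * (s ^+ 2 + s ^- 2 - y).
Proof. by rewrite (inv_sl2 det_P) (inv_sl2 det_Q) tr_P tr_Q !mx2E; field. Qed.

Lemma det_W_shift (p q : R[i]) : p ^+ 2 - y * p * q + q ^+ 2 = 1 ->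
  let W := (p *: P - q%:M) * (p *: Q - q%:M) in
  \det (W - (W 0 0 - (s - s^-1) * W 0 1)%:M) =
    - p ^+ 2 * (s ^+ 2 + s ^- 2 - y) *
      (2 - s ^+ 2 - s ^- 2 + (y - s ^+ 2 - s ^- 2) * (y - 2) * p ^+ 2).
Proof.
move=> rel /=; rewrite !mx2E !mxE /=.
apply/eqP; rewrite -subr_eq0; apply/eqP.
transitivity (p ^+ 2 * (s - s^-1) ^+ 2 * (s ^+ 2 + s ^- 2 - y) *
              (p ^+ 2 - y * p * q + q ^+ 2 - 1)); first by field.
by rewrite rel subrr mulr0.
Qed.

Lemma det_affine_PQ (p q : R[i]) : p ^+ 2 - y * p * q + q ^+ 2 = 1 ->
  \det (p *: P - q%:M) = 1 /\ \det (p *: Q - q%:M) = 1.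
Proof.
by move=> rel; split; rewrite det_affine2 ?det_P ?det_Q ?tr_P ?tr_Q -[RHS]rel; ring.
Qed.

Lemma tr_commutator_PQ (p q : R[i]) : p ^+ 2 - y * p * q + q ^+ 2 = 1 ->
  let U := p *: P - q%:M in let V := p *: Q - q%:M in
  \tr (U^-1 * V^-1 * (U * V)) =
    2 + p ^+ 4 * (s + s^-1) ^+ 2 * (y - 2) ^+ 2 * (s ^+ 2 + s ^- 2 - y).
Proof.
move=> rel U V; have [detU detV] := det_affine_PQ rel.
rewrite (tr_commutator_sl2 detU detV) (inv_affine_sl2 det_P detU) (inv_affine_sl2 det_Q detV).
by rewrite commutator_affine2 detZ det_commutator_PQ; ring.
Qed.

Lemma longitude_trace (p q : R[i]) (n : int) :
  p ^+ 2 - y * p * q + q ^+ 2 = 1 ->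
  let U := p *: P - q%:M in let V := p *: Q - q%:M in
  (U * V) ^ n * A = B * (U * V) ^ n ->
  \tr ((U^-1 * V^-1) ^ n * (U * V) ^ n) =
    2 - ((s + s^-1) ^+ 2 * (y - 2) ^+ 2 * p ^+ 2) /
        (2 - s ^+ 2 - s ^- 2 + (y - s ^+ 2 - s ^- 2) * (y - 2) * p ^+ 2).
Proof.
move=> rel U V hrel; have [detU detV] := det_affine_PQ rel.
have detW : \det (U * V) = 1 by rewrite det_mul2 detU detV; ring.
have detWr : \det (U^-1 * V^-1) = 1.
  by rewrite det_mul2 (det_inv_sl2 detU) (det_inv_sl2 detV); ring.
have trWr : \tr (U^-1 * V^-1) = \tr (U * V) := tr_inv_mul_sl2 detU detV.
set e := (U * V) 0 0 - (s - s^-1) * (U * V) 0 1.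
set a1 := chebS (n - 1) (\tr (U * V)); set a0 := chebS (n - 2) (\tr (U * V)).
have a0E : a0 = a1 * e by apply: riley_relation_shift; rewrite -(expz_chebS n detW).
have Wn : (U * V) ^ n = a1 *: (U * V - e%:M).
  by rewrite (expz_chebS n detW) -/a1 -/a0 a0E scalerBr scale_scalar_mx.
have Wrn : (U^-1 * V^-1) ^ n = a1 *: (U^-1 * V^-1 - e%:M).
  by rewrite (expz_chebS n detWr) trWr -/a1 -/a0 a0E scalerBr scale_scalar_mx.
have detWe1 : a1 ^+ 2 * \det (U * V - e%:M) = 1 by rewrite -detZ -Wn det_expz_sl2.
have trC : \tr (U^-1 * V^-1 * (U * V)) =
    2 + p ^+ 4 * (s + s^-1) ^+ 2 * (y - 2) ^+ 2 * (s ^+ 2 + s ^- 2 - y).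
  exact: tr_commutator_PQ rel.
have detWeE : \det (U * V - e%:M) = - p ^+ 2 * (s ^+ 2 + s ^- 2 - y) *
    (2 - s ^+ 2 - s ^- 2 + (y - s ^+ 2 - s ^- 2) * (y - 2) * p ^+ 2).
  exact: det_W_shift rel.
rewrite Wrn Wn tr_mul_shifted2 // trC detWeE; rewrite detWeE in detWe1.
set sg := s ^+ 2 + s ^- 2 - y in detWe1 *; set D := 2 - s ^+ 2 - s ^- 2 + _ in detWe1 *.
clearbody sg D.
have : - p ^+ 2 * sg * D != 0.
  by apply/eqP => D0; move/eqP: detWe1; rewrite D0 mulr0 eq_sym oner_eq0.
rewrite !mulf_eq0 !negb_or oppr_eq0 expf_eq0 /= => /andP[/andP[p0 sg0] D0].
by field; rewrite p0 sg0 D0 s_neq0.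
Qed.
End RileyRepresentation.

Theorem proposition2p7 (R : realType) (m n : int) (s y : R[i]) :
  m != 0 -> n != 0 -> s != 0 -> y != 2 ->
  (* rho(a), rho(b) define a representation of <a,b | w^n a = b w^n> *)
  rhoW m s y ^ n * rhoA s = rhoB s y * rhoW m s y ^ n ->
  \tr (rhoLambda m n s y) =
    2 - ((s + s^-1) ^+ 2 * (y - 2) ^+ 2 * (chebS (m - 1) y) ^+ 2) /
        (2 - s ^+ 2 - s ^- 2 + (y - s ^+ 2 - s ^- 2) * (y - 2) * (chebS (m - 1) y) ^+ 2).
Proof.
move=> _ _ s_neq0 _.
rewrite /rhoLambda; have [-> ->] := rhoW_chebS y s_neq0 m.
move=> hrel; exact: (longitude_trace s_neq0 (chebS_det m y) hrel).
Qed.
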